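(* Let $m,n,k\in\mathbb{N}$ and let $\mathrm{vec}:\mathbb{R}^{m\times n}\to\mathbb{R}^{mn}$ be column-major vectorization. Then for every $f\in ISD(\mathbb{R}^{mn},\mathbb{R}^k)$ there exists $\mathcal N\in MRNN(\mathbb{R}^{m\times n},\mathbb{R}^k)$ with $f=\mathcal N\circ\mathrm{vec}^{-1}$, and for every $\mathcal N\in MRNN(\mathbb{R}^{m\times n},\mathbb{R}^k)$ there exists $f\in ISD(\mathbb{R}^{mn},\mathbb{R}^k)$ with $\mathcal N=f\circ\mathrm{vec}$. Consequently $\mathcal N\mapsto \mathcal N\circ\mathrm{vec}^{-1}$ is a bijective ring homomorphism $MRNN(\mathbb{R}^{m\times n},\mathbb{R}^k)\to ISD(\mathbb{R}^{mn},\mathbb{R}^k)$ (pointwise operations).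
   Context: $ISD(\mathbb{R}^N,\mathbb{R}^k)$: maps whose components lie in the smallest set of functions $\mathbb{R}^N\to\mathbb{R}$ containing all real polynomials and closed under pointwise $\min$, $\max$. An $L$-layer matrix-recurrent neural network (MRNN) with input $X\in\mathbb{R}^{m\times n}$ computes $h_0=0\in\mathbb{R}^{d_0}$ and, for $\ell=1,\dots,L$, $h_\ell = b_{\ell,0} + A_{\ell,0}h_{\ell-1} + B_{\ell,0}(I\otimes X)h_{\ell-1} + \sigma\big(b_{\ell,1} + A_{\ell,1}h_{\ell-1} + B_{\ell,1}(I\otimes X)h_{\ell-1}\big)$, and outputs $h_L\in\mathbb{R}^k$; here $\sigma=\mathrm{ReLU}=\max(0,\cdot)$ componentwise, $I\otimes X$ is a Kronecker product with an identity matrix whose size may vary per layer (and per term) so that the products are defined, and $b_{\ell,i},A_{\ell,i},B_{\ell,i}$ are real vectors/matrices of compatible sizes (widths arbitrary). $MRNN(\mathbb{R}^{m\times n},\mathbb{R}^k)$ is the set of all functions computed by such networks for some $L\ge0$. *)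

From HB Require Import structures.
From mathcomp Require Import all_boot all_order all_algebra.
From mathcomp Require Import mpoly.
From mathcomp Require Import mxtens.
From mathcomp Require Import reals.

Set Implicit Arguments.
Unset Strict Implicit.
Unset Printing Implicit Defensive.

Import Order.TTheory GRing.Theory Num.Theory.
Local Open Scope ring_scope.

Section Defs.
Variable R : realType.

Inductive isd_scalar (N : nat) : ('cV[R]_N -> R) -> Prop :=
| isd_poly (p : {mpoly R[N]}) :
    isd_scalar (fun v => p.@[fun i => v i ord0])
| isd_min f g : isd_scalar f -> isd_scalar g ->
    isd_scalar (fun v => Num.min (f v) (g v))
| isd_max f g : isd_scalar f -> isd_scalar g ->
    isd_scalar (fun v => Num.max (f v) (g v)).

Definition ISD (N k : nat) (f : 'cV[R]_N -> 'cV[R]_k) : Prop :=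
  forall i : 'I_k, isd_scalar (fun v => f v i ord0).

(* mxvec is row-major (entry (i,j) of an m x n matrix at index i*n+j), so   *)
(* mxvec X^T puts X i j at index j*m+i, i.e. column-major order.            *)
Definition vec (m n : nat) (X : 'M[R]_(m, n)) : 'cV[R]_(m * n) :=
  (castmx (erefl 1%N, mulnC n m) (mxvec X^T))^T.

Definition unvec (m n : nat) (v : 'cV[R]_(m * n)) : 'M[R]_(m, n) :=
  (vec_mx (castmx (erefl 1%N, mulnC m n) v^T))^T.

Definition relu (d : nat) (x : 'cV[R]_d) : 'cV[R]_d := map_mx (fun a => Num.max 0 a) x.

(* mrnn_reach m n d h : the map X |-> h X (with values in R^d) is the       *)
(* hidden state h_L of some MRNN with L >= 0 layers and output width d.     *)
(* In a layer with input h : R^{d} and output in R^{d'}, the term           *)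
(* B_i (I_{p_i} (x) X) h is defined exactly when p_i * n = d (the size p_i  *)
(* of the identity may differ between the two terms), B_i : d' x (p_i m).   *)
Inductive mrnn_reach (m n : nat) : forall d : nat, ('M[R]_(m, n) -> 'cV[R]_d) -> Prop :=
| mrnn_zero (d0 : nat) : @mrnn_reach m n d0 (fun _ => 0)
| mrnn_layer (d d' : nat) (h : 'M[R]_(m, n) -> 'cV[R]_d)
    (p0 p1 : nat) (e0 : (p0 * n)%N = d) (e1 : (p1 * n)%N = d)
    (b0 b1 : 'cV[R]_d') (A0 A1 : 'M[R]_(d', d))
    (B0 : 'M[R]_(d', p0 * m)) (B1 : 'M[R]_(d', p1 * m)) :
    @mrnn_reach m n d h ->
    @mrnn_reach m n d' (fun X =>
      b0 + A0 *m h X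
         + B0 *m (((1%:M : 'M[R]_p0) *t X) *m castmx (esym e0, erefl 1%N) (h X))
      + relu (b1 + A1 *m h X
         + B1 *m (((1%:M : 'M[R]_p1) *t X) *m castmx (esym e1, erefl 1%N) (h X)))).

Definition MRNN (m n k : nat) (N : 'M[R]_(m, n) -> 'cV[R]_k) : Prop :=
  @mrnn_reach m n k N.

Definition hadamard (k : nat) (a b : 'cV[R]_k) : 'cV[R]_k := map2_mx *%R a b.

End Defs.

From HB Require Import structures.
From mathcomp Require Import all_boot all_order all_algebra.
From mathcomp Require Import mpoly mxtens reals.
From mathcomp Require Import lra.
From Stdlib Require Import FunctionalExtensionality.
Import Order.TTheory GRing.Theory Num.Theory.
Local Open Scope ring_scope.
Set Implicit Arguments.
Unset Strict Implicit.
Unset Printing Implicit Defensive.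

(** Going from networks to ISD, induction on the layers shows that every
  hidden unit, as a function of vec X, is built from constants, coordinates,
  sums, ReLU and products (the term (I ⊗ X) h is bilinear).  ISD is closed
  under products because ISD functions grow polynomially: if |a|, |b| <= k
  then x * min a b is a min/max expression in x a, x b and ± x k.
  Conversely, the scalar functions read off linearly from a network state
  contain the constants and are closed under linear combinations, ReLU (hence
  max and min) and multiplication by an entry X i j, which costs one bilinear
  layer; so they contain all polynomials in the entries of X and all ISD
  functions.  Networks of different depths run side by side by stacking their
  layers block-diagonally, the shallower one padded with layers that output
  zero. *)

Ltac case_min_max :=
  repeat match goal with
  | |- context [if ?a <= ?b then _ else _] =>
      lazymatch a with context [if _ then _ else _] => fail | _ =>
      lazymatch b with context [if _ then _ else _] => fail | _ =>
        case: (lerP a b) => ? end end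
  end.

(* The sign of [x] decides whether [x * min a b] is the min or the max of
   [x * a] and [x * b]; the clamps at [x * k] and [- (x * k)] select it. *)
Lemma mulr_min_bounded (R : realDomainType) (x a b k : R) :
  `|a| <= k -> `|b| <= k ->
  x * Num.min a b =
  Num.max (Num.min (Num.min (x * a) (x * b)) (x * k))
          (Num.min (Num.max (x * a) (x * b)) (- (x * k))).
Proof.
rewrite !ler_norml => /andP[? ?] /andP[? ?].
by have [?|?] := lerP 0 x; rewrite !minEle !maxEle; case_min_max; nra.
Qed.

Lemma delta_mulmx_col (R : comPzRingType) a b (r : 'I_a) (t : 'I_b) (V : 'cV[R]_b) :
  delta_mx r t *m V = V t 0 *: delta_mx r 0.
Proof.
rewrite -(mul_delta_mx (0 : 'I_1)) -mulmxA -rowE [row t V]mx11_scalar mul_mx_scalar.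
by rewrite mxE.
Qed.

(** * Closure properties of ISD *)

Section ISDClosure.
Variables (R : realType) (N : nat).
Implicit Types (f g : 'cV[R]_N -> R) (p q : {mpoly R[N]}).

Local Notation meval_at p := (fun v : 'cV[R]_N => p.@[fun i => v i ord0]).

Lemma isd_scalar_ext f g : f =1 g -> isd_scalar f -> isd_scalar g.
Proof. by move=> /functional_extensionality ->. Qed.

Lemma isd_const (c : R) : isd_scalar (fun _ : 'cV[R]_N => c).
Proof. by apply: isd_scalar_ext (isd_poly c%:MP) => v; rewrite mevalC. Qed.

Lemma isd_coord (i : 'I_N) : isd_scalar (fun v : 'cV[R]_N => v i ord0).
Proof. by apply: isd_scalar_ext (isd_poly 'X_i) => v; rewrite mevalXU. Qed.

Lemma isd_opp f : isd_scalar f -> isd_scalar (fun v => - f v).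
Proof.
elim=> [p|f1 f2 _ h1 _ h2|f1 f2 _ h1 _ h2].
- by apply: isd_scalar_ext (isd_poly (- p)) => v; rewrite mevalN.
- by apply: isd_scalar_ext (isd_max h1 h2) => v; rewrite oppr_min.
- by apply: isd_scalar_ext (isd_min h1 h2) => v; rewrite oppr_max.
Qed.

Lemma isd_add_closed g : (forall q, isd_scalar (fun v => g v + meval_at q v)) ->
  forall f, isd_scalar f -> isd_scalar (fun v => g v + f v).
Proof.
move=> hg f; elim=> [//|f1 f2 _ h1 _ h2|f1 f2 _ h1 _ h2].
- by apply: isd_scalar_ext (isd_min h1 h2) => v; rewrite addr_minr.
- by apply: isd_scalar_ext (isd_max h1 h2) => v; rewrite addr_maxr.
Qed.

Lemma isd_add f g : isd_scalar f -> isd_scalar g -> isd_scalar (fun v => f v + g v).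
Proof.
move=> hf; apply: isd_add_closed => q.
apply: isd_scalar_ext (isd_add_closed _ hf) => [v|q']; first exact: addrC.
by apply: isd_scalar_ext (isd_poly (q + q')) => v; rewrite mevalD.
Qed.

Lemma isd_sum (I : Type) (r : seq I) (F : I -> 'cV[R]_N -> R) :
  (forall i, isd_scalar (F i)) -> isd_scalar (fun v => \sum_(i <- r) F i v).
Proof.
move=> hF; elim: r => [|i r IH].
  by apply: isd_scalar_ext (isd_const 0) => v; rewrite big_nil.
by apply: isd_scalar_ext (isd_add (hF i) IH) => v; rewrite big_cons.
Qed.

Lemma isd_poly_bound f : isd_scalar f ->
  exists K, forall v, `|f v| <= meval_at K v.
Proof.
elim=> [p|f1 f2 _ [K1 h1] _ [K2 h2]|f1 f2 _ [K1 h1] _ [K2 h2]].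
- exists (p * p + 1) => v; rewrite mevalD mevalM meval1.
  by case: (lerP 0 (meval_at p v)) => ?; [rewrite ger0_norm|rewrite ltr0_norm]; nra.
- exists (K1 + K2) => v; rewrite mevalD; have := h1 v; have := h2 v.
  by have := normr_ge0 (f1 v); have := normr_ge0 (f2 v); rewrite minEle; case: ifP; lra.
- exists (K1 + K2) => v; rewrite mevalD; have := h1 v; have := h2 v.
  by have := normr_ge0 (f1 v); have := normr_ge0 (f2 v); rewrite maxEle; case: ifP; lra.
Qed.

Lemma isd_poly_bound2 f1 f2 : isd_scalar f1 -> isd_scalar f2 ->
  exists K, forall v, `|f1 v| <= meval_at K v /\ `|f2 v| <= meval_at K v.
Proof.
move=> /isd_poly_bound[K1 h1] /isd_poly_bound[K2 h2].
exists (K1 + K2) => v; rewrite mevalD; have := h1 v; have := h2 v.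
by have := normr_ge0 (f1 v); have := normr_ge0 (f2 v); lra.
Qed.

Lemma isd_mulr_min g f1 f2 (K : 'cV[R]_N -> R) :
  (forall v, `|f1 v| <= K v /\ `|f2 v| <= K v) ->
  isd_scalar (fun v => g v * f1 v) -> isd_scalar (fun v => g v * f2 v) ->
  isd_scalar (fun v => g v * K v) ->
  isd_scalar (fun v => g v * Num.min (f1 v) (f2 v)).
Proof.
move=> hK h1 h2 hgK.
apply: isd_scalar_ext (isd_max (isd_min (isd_min h1 h2) hgK)
                               (isd_min (isd_max h1 h2) (isd_opp hgK))) => v.
by have [? ?] := hK v; symmetry; apply: mulr_min_bounded.
Qed.

Lemma isd_mul_closed g : (forall q, isd_scalar (fun v => g v * meval_at q v)) ->
  forall f, isd_scalar f -> isd_scalar (fun v => g v * f v).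
Proof.
move=> hg f; elim=> [//|f1 f2 hf1 h1 hf2 h2|f1 f2 hf1 h1 hf2 h2];
  have [K hK] := isd_poly_bound2 hf1 hf2.
- exact: isd_mulr_min hK h1 h2 (hg K).
- have hK' v : `|- f1 v| <= meval_at K v /\ `|- f2 v| <= meval_at K v.
    by rewrite !normrN; apply: hK.
  have hg1 : isd_scalar (fun v => g v * - f1 v).
    by apply: isd_scalar_ext (isd_opp h1) => v; rewrite mulrN.
  have hg2 : isd_scalar (fun v => g v * - f2 v).
    by apply: isd_scalar_ext (isd_opp h2) => v; rewrite mulrN.
  apply: isd_scalar_ext (isd_opp (isd_mulr_min hK' hg1 hg2 (hg K))) => v.
  by rewrite -mulrN -oppr_max !opprK.
Qed.

Lemma isd_mul f g : isd_scalar f -> isd_scalar g -> isd_scalar (fun v => f v * g v).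
Proof.
move=> hf; apply: isd_mul_closed => q.
apply: isd_scalar_ext (isd_mul_closed _ hf) => [v|q']; first exact: mulrC.
by apply: isd_scalar_ext (isd_poly (q * q')) => v; rewrite mevalM.
Qed.

End ISDClosure.

Section ISDMaps.
Variables (R : realType) (N : nat).
Implicit Types (k : nat).

Lemma ISD_const k (c : 'cV[R]_k) : ISD (fun _ : 'cV[R]_N => c).
Proof. by move=> i; exact: isd_const. Qed.

Lemma ISD_add k (F G : 'cV[R]_N -> 'cV[R]_k) :
  ISD F -> ISD G -> ISD (fun v => F v + G v).
Proof. by move=> hF hG i; apply: isd_scalar_ext (isd_add (hF i) (hG i)) => v; rewrite mxE. Qed.

Lemma ISD_opp k (F : 'cV[R]_N -> 'cV[R]_k) : ISD F -> ISD (fun v => - F v).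
Proof. by move=> hF i; apply: isd_scalar_ext (isd_opp (hF i)) => v; rewrite mxE. Qed.

Lemma ISD_hadamard k (F G : 'cV[R]_N -> 'cV[R]_k) :
  ISD F -> ISD G -> ISD (fun v => hadamard (F v) (G v)).
Proof. by move=> hF hG i; apply: isd_scalar_ext (isd_mul (hF i) (hG i)) => v; rewrite mxE. Qed.

Lemma ISD_relu k (F : 'cV[R]_N -> 'cV[R]_k) : ISD F -> ISD (fun v => relu (F v)).
Proof. by move=> hF i; apply: isd_scalar_ext (isd_max (isd_const _ 0) (hF i)) => v; rewrite mxE. Qed.

Lemma ISD_mulmx a b (A : 'cV[R]_N -> 'M[R]_(a, b)) (F : 'cV[R]_N -> 'cV[R]_b) :
  (forall i j, isd_scalar (fun v => A v i j)) -> ISD F -> ISD (fun v => A v *m F v).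
Proof.
move=> hA hF i.
apply: isd_scalar_ext (isd_sum (index_enum _) (fun j => isd_mul (hA i j) (hF j))) => v.
by rewrite mxE.
Qed.

Lemma ISD_mulmxl a b (A : 'M[R]_(a, b)) (F : 'cV[R]_N -> 'cV[R]_b) :
  ISD F -> ISD (fun v => A *m F v).
Proof. exact: (@ISD_mulmx _ _ (fun=> A)) (fun i j => isd_const _ _). Qed.

Lemma ISD_castmx d d' (e : d = d') (F : 'cV[R]_N -> 'cV[R]_d) :
  ISD F -> ISD (fun v => castmx (e, erefl 1%N) (F v)).
Proof. by case: d' / e => hF i; apply: isd_scalar_ext (hF i) => v; rewrite castmx_id. Qed.

End ISDMaps.

(** * Networks compute ISD maps *)

Section Vectorization.
Variables (R : realType) (m n : nat).

Lemma unvecE (v : 'cV[R]_(m * n)) i j :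
  unvec v i j = v (cast_ord (esym (mulnC m n)) (mxvec_index j i)) 0.
Proof. by rewrite /unvec !mxE castmxE mxE; congr (v _ _); apply: val_inj. Qed.

Lemma vecK : cancel (@unvec R m n) (@vec R m n).
Proof. by move=> v; rewrite /vec /unvec trmxK vec_mxK castmx_comp castmx_id trmxK. Qed.

Lemma unvecK : cancel (@vec R m n) (@unvec R m n).
Proof. by move=> X; rewrite /vec /unvec trmxK castmx_comp castmx_id mxvecK trmxK. Qed.

Lemma vec_entry (l : 'I_(m * n)) : exists i j, forall X : 'M[R]_(m, n), vec X l 0 = X i j.
Proof.
move E: (cast_ord (esym (mulnC n m)) l) => k; case: (mxvec_indexP k) E => j i E.
by exists i, j => X; rewrite mxE castmxE /= cast_ord_id E mxvecE mxE.
Qed.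

End Vectorization.

Section TensorAction.
Variables (R : realType) (m n : nat).
Local Notation M := 'M[R]_(m, n).

Definition tens_act p d (e : (p * n)%N = d) (X : M) (u : 'cV[R]_d) : 'cV[R]_(p * m) :=
  ((1%:M : 'M[R]_p) *t X) *m castmx (esym e, erefl 1%N) u.

Lemma tens1mx_mulE p (X : M) (w : 'cV[R]_(p * n)) (a : 'I_p) (i : 'I_m) :
  (((1%:M : 'M[R]_p) *t X) *m w) (mxtens_index (a, i)) 0 =
  \sum_(l < n) X i l * w (mxtens_index (a, l)) 0.
Proof.
rewrite mxE (reindex (@mxtens_index p n)) /=; last first.
  by exists (@mxtens_unindex p n) => x _; rewrite (mxtens_indexK, mxtens_unindexK).
transitivity (\sum_(b < p) \sum_(l < n) ((1%:M : 'M[R]_p) *t X)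
    (mxtens_index (a, i)) (mxtens_index (b, l)) * w (mxtens_index (b, l)) 0).
  by rewrite pair_big /=; apply: eq_bigr => -[b l] _.
rewrite (bigD1 a) //= [X in _ + X]big1 ?addr0.
  by apply: eq_bigr => l _; rewrite tensmxE mxE eqxx mul1r.
by move=> b /negPf hb; apply: big1 => l _; rewrite tensmxE mxE eq_sym hb !mul0r.
Qed.

Lemma tens_act_col p q d1 d2 (e1 : (p * n)%N = d1) (e2 : (q * n)%N = d2)
    (e : ((p + q) * n)%N = (d1 + d2)%N) X (u1 : 'cV[R]_d1) (u2 : 'cV[R]_d2) :
  tens_act e X (col_mx u1 u2) = castmx (esym (mulnDl p q m), erefl 1%N)
    (col_mx (tens_act e1 X u1) (tens_act e2 X u2)).
Proof.
apply/colP => r; case: (mxtens_indexP r) => a i.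
rewrite /tens_act tens1mx_mulE castmxE /= cast_ord_id.
case: (splitP a) => a' ha'.
- have -> : cast_ord (esym (esym (mulnDl p q m))) (mxtens_index (a, i))
      = lshift (q * m) (mxtens_index (a', i)) by apply: val_inj; rewrite /= ha'.
  rewrite col_mxEu tens1mx_mulE; apply: eq_bigr => l _; rewrite !castmxE /=.
  have -> : cast_ord (esym (esym e)) (mxtens_index (a, l))
      = lshift d2 (cast_ord (esym (esym e1)) (mxtens_index (a', l))).
    by apply: val_inj; rewrite /= ha'.
  by rewrite col_mxEu.
- have -> : cast_ord (esym (esym (mulnDl p q m))) (mxtens_index (a, i))
      = rshift (p * m) (mxtens_index (a', i)).
    by apply: val_inj; rewrite /= ha' mulnDl addnA.
  rewrite col_mxEd tens1mx_mulE; apply: eq_bigr => l _; rewrite !castmxE /=.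
  have -> : cast_ord (esym (esym e)) (mxtens_index (a, l))
      = rshift d1 (cast_ord (esym (esym e2)) (mxtens_index (a', l))).
    by apply: val_inj; rewrite /= ha' mulnDl -e1 addnA.
  by rewrite col_mxEd.
Qed.

Lemma tens_act1 (X : M) (u : 'cV[R]_n) :
  tens_act (mul1n n) X u = castmx (esym (mul1n m), erefl 1%N) (X *m u).
Proof.
apply/colP => r; case: (mxtens_indexP r) => a i; rewrite [a]ord1 /tens_act tens1mx_mulE.
rewrite castmxE mxE /=; have -> : cast_ord (esym (esym (mul1n m))) (mxtens_index (0, i)) = i.
  by apply: val_inj; rewrite /= mul0n.
apply: eq_bigr => l _; rewrite castmxE /=; congr (_ * u _ _).
by apply: val_inj; rewrite /= mul0n.
Qed.

End TensorAction.

Section MRNNtoISD.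
Variables (R : realType) (m n : nat).

Lemma isd_unvec i j : isd_scalar (fun v : 'cV[R]_(m * n) => unvec v i j).
Proof. by apply: isd_scalar_ext (isd_coord _ _) => v; rewrite unvecE. Qed.

Lemma isd_tens1mx_unvec p a c :
  isd_scalar (fun v : 'cV[R]_(m * n) => ((1%:M : 'M[R]_p) *t unvec v) a c).
Proof.
case: (mxtens_indexP a) => a1 a2; case: (mxtens_indexP c) => c1 c2.
by apply: isd_scalar_ext (isd_mul (isd_const _ _) (isd_unvec a2 c2)) => v; rewrite tensmxE.
Qed.

Lemma ISD_tens_act p d (e : (p * n)%N = d) (H : 'cV[R]_(m * n) -> 'cV[R]_d) :
  ISD H -> ISD (fun v => tens_act e (unvec v) (H v)).
Proof. by move=> hH; apply: ISD_mulmx (@isd_tens1mx_unvec p) (ISD_castmx _ hH). Qed.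

Lemma ISD_mrnn_reach d (h : 'M[R]_(m, n) -> 'cV[R]_d) :
  mrnn_reach h -> ISD (fun v => h (unvec v)).
Proof.
elim=> [d0|{}d d' {}h p0 p1 e0 e1 b0 b1 A0 A1 B0 B1 _ IH]; first exact: ISD_const.
have ISD_affine (b : 'cV[R]_d') (A : 'M[R]_(d', d)) p (e : (p * n)%N = d) B :
    ISD (fun v => b + A *m h (unvec v) + B *m tens_act e (unvec v) (h (unvec v))).
  exact: ISD_add (ISD_add (ISD_const _ b) (ISD_mulmxl A IH)) (ISD_mulmxl B (ISD_tens_act e IH)).
exact: ISD_add (ISD_affine _ _ _ _ _) (ISD_relu (ISD_affine _ _ _ _ _)).
Qed.

End MRNNtoISD.

(** * ISD maps are computed by networks *)

Section MRNNReach.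
Variables (R : realType) (m n : nat).
Local Notation M := 'M[R]_(m, n).

Lemma mrnn_reach_ext d (h h' : M -> 'cV[R]_d) : h =1 h' -> mrnn_reach h -> mrnn_reach h'.
Proof. by move=> /functional_extensionality ->. Qed.

Record layer d d' := Layer {
  lp0 : nat; lp1 : nat; le0 : (lp0 * n)%N = d; le1 : (lp1 * n)%N = d;
  lb0 : 'cV[R]_d'; lb1 : 'cV[R]_d'; lA0 : 'M[R]_(d', d); lA1 : 'M[R]_(d', d);
  lB0 : 'M[R]_(d', lp0 * m); lB1 : 'M[R]_(d', lp1 * m) }.

Definition layer_map d d' (L : layer d d') (X : M) (u : 'cV[R]_d) : 'cV[R]_d' :=
  lb0 L + lA0 L *m u + lB0 L *m tens_act (le0 L) X u
  + relu (lb1 L + lA1 L *m u + lB1 L *m tens_act (le1 L) X u).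

Lemma mrnn_reach_layer d d' (L : layer d d') (h : M -> 'cV[R]_d) :
  mrnn_reach h -> mrnn_reach (fun X => layer_map L X (h X)).
Proof. by case: L => *; exact: mrnn_layer. Qed.

Lemma relu0 d : relu (0 : 'cV[R]_d) = 0.
Proof. by apply/matrixP => i j; rewrite !mxE maxxx. Qed.

Definition zero_layer p d (e : (p * n)%N = d) d' : layer d d' := Layer e e 0 0 0 0 0 0.

Lemma zero_layerE p d (e : (p * n)%N = d) d' X u : layer_map (zero_layer e d') X u = 0.
Proof. by rewrite /layer_map /= !mul0mx !addr0 relu0 addr0. Qed.

Lemma layer_col d1 d1' d2 d2' (L1 : layer d1 d1') (L2 : layer d2 d2') :
  exists L : layer (d1 + d2) (d1' + d2'), forall X u1 u2,
    layer_map L X (col_mx u1 u2) = col_mx (layer_map L1 X u1) (layer_map L2 X u2).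
Proof.
have tens_term_col p q (e1 : (p * n)%N = d1) (e2 : (q * n)%N = d2)
    (B1 : 'M[R]_(d1', p * m)) (B2 : 'M[R]_(d2', q * m)) :
  exists (e : ((p + q) * n)%N = (d1 + d2)%N) (BB : 'M[R]_(d1' + d2', (p + q) * m)),
    forall X u1 u2, BB *m tens_act e X (col_mx u1 u2)
                    = col_mx (B1 *m tens_act e1 X u1) (B2 *m tens_act e2 X u2).
  have e : ((p + q) * n)%N = (d1 + d2)%N by rewrite mulnDl e1 e2.
  exists e, (castmx (erefl _, esym (mulnDl p q m)) (block_mx B1 0 0 B2)) => X u1 u2.
  rewrite (tens_act_col e1 e2) mulmx_cast castmx_comp !castmx_id.
  by rewrite mul_block_col !mul0mx addr0 add0r.
case: L1 => p0 p1 e0 e1 b0 b1 A0 A1 B0 B1; case: L2 => q0 q1 f0 f1 c0 c1 C0 C1 D0 D1.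
have [E0 [BB0 HB0]] := tens_term_col _ _ e0 f0 B0 D0.
have [E1 [BB1 HB1]] := tens_term_col _ _ e1 f1 B1 D1.
exists (Layer E0 E1 (col_mx b0 c0) (col_mx b1 c1) (block_mx A0 0 0 C0)
          (block_mx A1 0 0 C1) BB0 BB1) => X u1 u2.
by rewrite /layer_map /= HB0 HB1 !mul_block_col !mul0mx !addr0 !add0r !add_col_mx
  /relu map_col_mx add_col_mx.
Qed.

Lemma mrnn_reach_layer_col d1 d1' d2 d2' (L1 : layer d1 d1') (L2 : layer d2 d2')
    (h1 : M -> 'cV[R]_d1) (h2 : M -> 'cV[R]_d2) :
  mrnn_reach (fun X => col_mx (h1 X) (h2 X)) ->
  mrnn_reach (fun X => col_mx (layer_map L1 X (h1 X)) (layer_map L2 X (h2 X))).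
Proof.
have [L HL] := layer_col L1 L2.
by move=> /(mrnn_reach_layer L); apply: mrnn_reach_ext => X; rewrite HL.
Qed.

(* A zero layer only needs the width equation [p * n = d] of some layer on the
   same input; it pads the shallower of two networks run in parallel. *)
Lemma mrnn_reach_col0 d2 (h2 : M -> 'cV[R]_d2) : mrnn_reach h2 ->
  forall d1, mrnn_reach (fun X => col_mx (0 : 'cV[R]_d1) (h2 X)).
Proof.
elim=> [d0 | d d' h p0 p1 e0 e1 b0 b1 A0 A1 B0 B1 _ IH] d1.
  by apply: mrnn_reach_ext (mrnn_zero R m n (d1 + d0)) => X; rewrite col_mx0.
have := mrnn_reach_layer_col (zero_layer e0 d1) (Layer e0 e1 b0 b1 A0 A1 B0 B1) (IH d).
by apply: mrnn_reach_ext => X; rewrite zero_layerE.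
Qed.

Lemma mrnn_reach_col d1 (h1 : M -> 'cV[R]_d1) d2 (h2 : M -> 'cV[R]_d2) :
  mrnn_reach h1 -> mrnn_reach h2 -> mrnn_reach (fun X => col_mx (h1 X) (h2 X)).
Proof.
move=> hh1; elim: hh1 d2 h2 => [d0 | d d' h p0 p1 e0 e1 b0 b1 A0 A1 B0 B1 hh IH] d2 h2 hh2.
  exact: mrnn_reach_col0.
pose L := Layer e0 e1 b0 b1 A0 A1 B0 B1.
case: d2 h2 / hh2 => [d2 | c c' g q0 q1 f0 f1 c0 c1 C0 C1 D0 D1 hg].
- have := mrnn_reach_layer_col L (zero_layer e0 d2) (IH _ _ hh).
  by apply: mrnn_reach_ext => X; rewrite zero_layerE.
- by have := mrnn_reach_layer_col L (Layer f0 f1 c0 c1 C0 C1 D0 D1) (IH _ _ hg).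
Qed.

Lemma mrnn_reach_const d (b : 'cV[R]_d) : mrnn_reach (fun _ : M => b).
Proof.
have := mrnn_reach_layer (Layer (mul0n n) (mul0n n) b 0 0 0 0 0) (mrnn_zero R m n 0).
by apply: mrnn_reach_ext => X; rewrite /layer_map /= !mul0mx !addr0 relu0 addr0.
Qed.

Section OneTermLayers.
Variables (p d : nat) (e : (p * n)%N = d) (h : M -> 'cV[R]_d).
Hypothesis hh : mrnn_reach h.

Lemma mrnn_reach_mulmx d' (A : 'M[R]_(d', d)) : mrnn_reach (fun X => A *m h X).
Proof.
have := mrnn_reach_layer (Layer e e 0 0 A 0 0 0) hh.
by apply: mrnn_reach_ext => X; rewrite /layer_map /= !mul0mx !add0r !addr0 relu0 addr0.
Qed.

Lemma mrnn_reach_relu : mrnn_reach (fun X => relu (h X)).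
Proof.
have := mrnn_reach_layer (Layer e e 0 0 0 1 0 0) hh.
by apply: mrnn_reach_ext => X; rewrite /layer_map /= !mul0mx !add0r mul1mx; congr relu; exact: addr0.
Qed.

Lemma mrnn_reach_tens d' (B : 'M[R]_(d', p * m)) :
  mrnn_reach (fun X => B *m tens_act e X (h X)).
Proof.
have := mrnn_reach_layer (Layer e e 0 0 0 0 B 0) hh.
by apply: mrnn_reach_ext => X; rewrite /layer_map /= !mul0mx !add0r relu0 addr0.
Qed.

End OneTermLayers.

End MRNNReach.

Section Readout.
Variables (R : realType) (m n : nat).
Local Notation M := 'M[R]_(m, n).

(* The width of the state is a multiple of [n] so that it can feed one more layer. *)
Definition mrnn_readout k (G : M -> 'cV[R]_k) :=
  exists d (h : M -> 'cV[R]_d) (C : 'M[R]_(k, d)),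
    [/\ mrnn_reach h, exists p, (p * n)%N = d & forall X, G X = C *m h X].

Lemma mrnn_readout_ext k (G G' : M -> 'cV[R]_k) :
  G =1 G' -> mrnn_readout G -> mrnn_readout G'.
Proof. by move=> /functional_extensionality ->. Qed.

Lemma MRNN_readout k (G : M -> 'cV[R]_k) : mrnn_readout G -> MRNN G.
Proof.
case=> d [h [C [hh [p e] hG]]].
by apply: mrnn_reach_ext (mrnn_reach_mulmx e hh C) => X; rewrite hG.
Qed.

Lemma mrnn_readout_mulmx k k' (A : 'M[R]_(k', k)) (G : M -> 'cV[R]_k) :
  mrnn_readout G -> mrnn_readout (fun X => A *m G X).
Proof.
case=> d [h [C [hh hd hG]]]; exists d, h, (A *m C); split=> // X.
by rewrite hG mulmxA.
Qed.

Lemma mrnn_readout_add k (G1 G2 : M -> 'cV[R]_k) :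
  mrnn_readout G1 -> mrnn_readout G2 -> mrnn_readout (fun X => G1 X + G2 X).
Proof.
case=> d1 [h1 [C1 [hh1 [p1 e1] hG1]]] [d2 [h2 [C2 [hh2 [p2 e2] hG2]]]].
exists (d1 + d2)%N, (fun X => col_mx (h1 X) (h2 X)), (row_mx C1 C2).
split; first exact: mrnn_reach_col.
  by exists (p1 + p2)%N; rewrite mulnDl e1 e2.
by move=> X; rewrite mul_row_col hG1 hG2.
Qed.

Lemma mrnn_readout_sum (I : Type) (r : seq I) k (F : I -> M -> 'cV[R]_k) :
  (forall i, mrnn_readout (F i)) -> mrnn_readout (fun X => \sum_(i <- r) F i X).
Proof.
move=> hF; elim: r => [|i r IH].
  exists 0%N, (fun _ => 0), 0; split; first exact: mrnn_zero.
    by exists 0%N.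
  by move=> X; rewrite big_nil mul0mx.
by apply: mrnn_readout_ext (mrnn_readout_add (hF i) IH) => X; rewrite big_cons.
Qed.

Definition mrnn_readout1 (g : M -> R) := mrnn_readout (fun X => (g X)%:M : 'cV[R]_1).

Lemma mrnn_readout1_ext g g' : g =1 g' -> mrnn_readout1 g -> mrnn_readout1 g'.
Proof. by move=> /functional_extensionality ->. Qed.

Lemma mrnn_readout1_delta (j : 'I_n) g :
  mrnn_reach (fun X => g X *: (delta_mx j 0 : 'cV[R]_n)) -> mrnn_readout1 g.
Proof.
move=> hh; exists n, (fun X => g X *: delta_mx j 0), (delta_mx 0 j).
split=> //; first by exists 1%N; rewrite mul1n.
move=> X; rewrite -scalemxAr mul_delta_mx.
by apply/matrixP => a b; rewrite !ord1 !mxE /= mulr1n mulr1.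
Qed.

Lemma mrnn_reach_delta (j : 'I_n) g :
  mrnn_readout1 g -> mrnn_reach (fun X => g X *: (delta_mx j 0 : 'cV[R]_n)).
Proof.
case=> d [h [C [hh [p e] hg]]].
apply: mrnn_reach_ext (mrnn_reach_mulmx e hh (delta_mx j 0 *m C)) => X.
by rewrite -mulmxA -hg mul_mx_scalar.
Qed.

Lemma mrnn_readout1_add g1 g2 :
  mrnn_readout1 g1 -> mrnn_readout1 g2 -> mrnn_readout1 (fun X => g1 X + g2 X).
Proof.
by move=> h1 h2; apply: mrnn_readout_ext (mrnn_readout_add h1 h2) => X; rewrite raddfD.
Qed.

Lemma mrnn_readout1_scale c g : mrnn_readout1 g -> mrnn_readout1 (fun X => c * g X).
Proof.
by move=> hg; apply: mrnn_readout_ext (mrnn_readout_mulmx c%:M hg) => X; rewrite scalar_mxM.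
Qed.

Lemma mrnn_readout1_sum (I : Type) (r : seq I) (F : I -> M -> R) :
  (forall i, mrnn_readout1 (F i)) -> mrnn_readout1 (fun X => \sum_(i <- r) F i X).
Proof.
by move=> hF; apply: mrnn_readout_ext (mrnn_readout_sum r hF) => X; rewrite raddf_sum.
Qed.

Lemma relu_scale_delta d (a : R) (j : 'I_d) :
  relu (a *: (delta_mx j 0 : 'cV[R]_d)) = Num.max 0 a *: delta_mx j 0.
Proof. by apply/colP => r; rewrite !mxE; case: (_ && _); rewrite ?mulr1 ?mulr0 ?maxxx. Qed.

(* Scalars are carried in states of width [n], which is why [n > 0] is needed. *)
Variable z : 'I_n.

Lemma mrnn_readout1_const (a : R) : mrnn_readout1 (fun _ => a).
Proof. exact: (mrnn_readout1_delta (mrnn_reach_const m n (a *: delta_mx z 0))). Qed.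

Lemma mrnn_readout1_relu g : mrnn_readout1 g -> mrnn_readout1 (fun X => Num.max 0 (g X)).
Proof.
move=> /(mrnn_reach_delta z) /(mrnn_reach_relu (mul1n n)) hh.
by apply: (mrnn_readout1_delta (j := z)); apply: mrnn_reach_ext hh => X; rewrite relu_scale_delta.
Qed.

Lemma mrnn_readout1_mul_entry (i : 'I_m) (j : 'I_n) g :
  mrnn_readout1 g -> mrnn_readout1 (fun X => X i j * g X).
Proof.
move=> /(mrnn_reach_delta j) hh; apply: (mrnn_readout1_delta (j := z)).
apply: mrnn_reach_ext (mrnn_reach_tens (mul1n n) hh (delta_mx z (mxtens_index (0, i)))) => X.
rewrite delta_mulmx_col tens_act1 castmxE /= -scalemxAr -colE !mxE mulrC.
by congr (X _ _ * _ *: _); apply: val_inj; rewrite /= mul0n.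
Qed.

Lemma mrnn_readout1_max g1 g2 : mrnn_readout1 g1 -> mrnn_readout1 g2 ->
  mrnn_readout1 (fun X => Num.max (g1 X) (g2 X)).
Proof.
move=> h1 h2; have h21 := mrnn_readout1_add h2 (mrnn_readout1_scale (-1) h1).
apply: mrnn_readout1_ext (mrnn_readout1_add h1 (mrnn_readout1_relu h21)) => X.
by rewrite addr_maxr addr0 mulN1r addrC subrK.
Qed.

Lemma mrnn_readout1_mul_coord (l : 'I_(m * n)) g :
  mrnn_readout1 g -> mrnn_readout1 (fun X => vec X l 0 * g X).
Proof.
have [i [j hij]] := @vec_entry R m n l.
by move=> /(mrnn_readout1_mul_entry i j); apply: mrnn_readout1_ext => X; rewrite hij.
Qed.

Lemma mrnn_readout1_monomial (mon : 'X_{1..m * n}) :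
  mrnn_readout1 (fun X => \prod_(l < m * n) vec X l 0 ^+ mon l).
Proof.
elim: (index_enum _) => [|l r IH].
  by apply: mrnn_readout1_ext (mrnn_readout1_const 1) => X; rewrite big_nil.
apply: mrnn_readout1_ext (_ : mrnn_readout1 (fun X => vec X l 0 ^+ mon l * _)) => [X|].
  by rewrite big_cons.
elim: (mon l) => [|e IHe].
  by apply: mrnn_readout1_ext IH => X; rewrite expr0 mul1r.
by apply: mrnn_readout1_ext (mrnn_readout1_mul_coord l IHe) => X; rewrite exprS mulrA.
Qed.

Lemma mrnn_readout1_mpoly (p : {mpoly R[m * n]}) :
  mrnn_readout1 (fun X => p.@[fun l => vec X l 0]).
Proof.
apply: mrnn_readout1_ext (mrnn_readout1_sum (msupp p)
  (fun mon => mrnn_readout1_scale p@_mon (mrnn_readout1_monomial mon))) => X.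
by rewrite mevalE.
Qed.

Lemma mrnn_readout1_isd (f : 'cV[R]_(m * n) -> R) :
  isd_scalar f -> mrnn_readout1 (fun X => f (vec X)).
Proof.
elim=> [p|f1 f2 _ h1 _ h2|f1 f2 _ h1 _ h2]; last exact: mrnn_readout1_max.
  exact: mrnn_readout1_mpoly.
have hN g : mrnn_readout1 g -> mrnn_readout1 (fun X => - g X).
  by move=> /(mrnn_readout1_scale (-1)); apply: mrnn_readout1_ext => X; rewrite mulN1r.
apply: mrnn_readout1_ext (hN _ (mrnn_readout1_max (hN _ h1) (hN _ h2))) => X.
by rewrite oppr_max !opprK.
Qed.

End Readout.

Section Correspondence.
Variables (R : realType) (m n k : nat).
Local Notation M := 'M[R]_(m, n).

Lemma MRNN_ISD_vec (f : 'cV[R]_(m * n) -> 'cV[R]_k) : ISD f -> MRNN (fun X : M => f (vec X)).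
Proof.
move=> hf; have [n0|n_gt0] := posnP n.
  apply: mrnn_reach_ext (mrnn_reach_const m n (f 0)) => X; congr f.
  by apply/matrixP => -[i hi] j; exfalso; rewrite n0 muln0 in hi.
pose z : 'I_n := Ordinal n_gt0.
apply/MRNN_readout/(@mrnn_readout_ext _ _ _ _
  (fun X => \sum_i delta_mx i 0 *m (f (vec X) i 0)%:M)) => [X|].
  by rewrite [RHS]matrix_sum_delta; apply: eq_bigr => i _; rewrite big_ord1 mul_mx_scalar.
by apply: mrnn_readout_sum => i; apply: mrnn_readout_mulmx (mrnn_readout1_isd z (hf i)).
Qed.

Lemma MRNN_ISD (N : M -> 'cV[R]_k) : MRNN N <-> ISD (N \o @unvec R m n).
Proof.
split; first exact: ISD_mrnn_reach.
by move=> /MRNN_ISD_vec; apply: mrnn_reach_ext => X /=; rewrite unvecK.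
Qed.

Lemma comp_unvec_inj (N1 N2 : M -> 'cV[R]_k) :
  N1 \o @unvec R m n = N2 \o @unvec R m n -> N1 = N2.
Proof.
move=> E; apply: functional_extensionality => X.
by rewrite -[X]unvecK; have /= -> := congr1 (fun F => F (vec X)) E.
Qed.

End Correspondence.

Theorem mainTheorem8 (R : realType) (m n k : nat) :
  (forall f : 'cV[R]_(m * n) -> 'cV[R]_k, ISD f ->
     exists N : 'M[R]_(m, n) -> 'cV[R]_k, MRNN N /\ f = N \o @unvec R m n) /\
  (forall N : 'M[R]_(m, n) -> 'cV[R]_k, MRNN N ->
     exists f : 'cV[R]_(m * n) -> 'cV[R]_k, ISD f /\ N = f \o @vec R m n) /\
  (MRNN (fun _ : 'M[R]_(m, n) => (0 : 'cV[R]_k)) /\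
   MRNN (fun _ : 'M[R]_(m, n) => (const_mx 1 : 'cV[R]_k)) /\
   (forall N1 N2 : 'M[R]_(m, n) -> 'cV[R]_k, MRNN N1 -> MRNN N2 ->
      MRNN (fun X => N1 X + N2 X) /\
      MRNN (fun X => - N1 X) /\
      MRNN (fun X => hadamard (N1 X) (N2 X)))) /\
  (forall N : 'M[R]_(m, n) -> 'cV[R]_k, MRNN N -> ISD (N \o @unvec R m n)) /\
  (forall N1 N2 : 'M[R]_(m, n) -> 'cV[R]_k, MRNN N1 -> MRNN N2 ->
     N1 \o @unvec R m n = N2 \o @unvec R m n -> N1 = N2) /\
  (forall f : 'cV[R]_(m * n) -> 'cV[R]_k, ISD f ->
     exists2 N, MRNN N & N \o @unvec R m n = f) /\
  (forall N1 N2 : 'M[R]_(m, n) -> 'cV[R]_k,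
     (fun X => N1 X + N2 X) \o @unvec R m n
       = (fun v => (N1 \o @unvec R m n) v + (N2 \o @unvec R m n) v) /\
     (fun X => hadamard (N1 X) (N2 X)) \o @unvec R m n
       = (fun v => hadamard ((N1 \o @unvec R m n) v) ((N2 \o @unvec R m n) v)) /\
     (fun X => - N1 X) \o @unvec R m n = (fun v => - (N1 \o @unvec R m n) v) /\
     (fun _ : 'M[R]_(m, n) => (const_mx 1 : 'cV[R]_k)) \o @unvec R m n
       = (fun _ => const_mx 1)).
Proof.
have ISD_MRNN (f : 'cV[R]_(m * n) -> 'cV[R]_k) : ISD f ->
    exists2 N, MRNN N & N \o @unvec R m n = f.
  move=> hf; exists (fun X => f (vec X)); first exact: MRNN_ISD_vec.
  by apply: functional_extensionality => v /=; rewrite vecK.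
split; first by move=> f /ISD_MRNN[N hN <-]; exists N.
split.
  move=> N /MRNN_ISD hN; exists (N \o @unvec R m n); split=> //.
  by apply: functional_extensionality => X /=; rewrite unvecK.
split.
  split; first exact: mrnn_reach_const.
  split; first exact: mrnn_reach_const.
  move=> N1 N2 /MRNN_ISD h1 /MRNN_ISD h2; rewrite !MRNN_ISD.
  by split; [exact: ISD_add | split; [exact: ISD_opp | exact: ISD_hadamard]].
split; first by move=> N /MRNN_ISD.
split; first by move=> N1 N2 _ _; exact: comp_unvec_inj.
by split.
Qed.
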